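(* Let $\Bbbk$ be a field of characteristic zero, $S=\Bbbk[x_1,x_2,x_3,x_4]$, $d\geq 2$, and $I=(x_1^d,x_2^d,x_3^d,x_4^d,x_1^{d-1}x_2,x_{3}^{d-1}x_4)$. Then $S/I$ fails the WLP in degree $2d-3$.
   Context: For a monomial ideal $I$, $A=S/I$ fails the WLP in degree $i$ if $\times(x_1+\cdots+x_4): A_i\to A_{i+1}$ is neither injective nor surjective. *)

From HB Require Import structures.
From mathcomp Require Import all_boot all_order all_algebra.
From mathcomp.multinomials Require Import mpoly.
Set Implicit Arguments. Unset Strict Implicit. Unset Printing Implicit Defensive.
Import GRing.Theory.
Local Open Scope ring_scope.

Definition in_ideal (F : fieldType) (n : nat) (gs : seq {mpoly F[n]})
  (f : {mpoly F[n]}) : Prop :=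
  exists h : 'I_(size gs) -> {mpoly F[n]}, f = \sum_(j < size gs) h j * gs`_j.

Definition lin_form (F : fieldType) (n : nat) : {mpoly F[n]} :=
  \sum_(i < n) 'X_i.

(* A = S/I; A_i = S_i / (I cap S_i).  Multiplication by l : A_i -> A_{i+1}
   is injective / surjective, written out on representatives. *)
Definition mult_injective (F : fieldType) (n : nat) (gs : seq {mpoly F[n]})
  (i : nat) : Prop :=
  forall f : {mpoly F[n]}, f \is i.-homog ->
    in_ideal gs (lin_form F n * f) -> in_ideal gs f.

Definition mult_surjective (F : fieldType) (n : nat) (gs : seq {mpoly F[n]})
  (i : nat) : Prop :=
  forall g : {mpoly F[n]}, g \is i.+1.-homog ->
    exists2 f : {mpoly F[n]}, f \is i.-homog & in_ideal gs (g - lin_form F n * f).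

Definition fails_WLP_in (F : fieldType) (n : nat) (gs : seq {mpoly F[n]})
  (i : nat) : Prop :=
  ~ mult_injective gs i /\ ~ mult_surjective gs i.

(* Generators of I = (x1^d, x2^d, x3^d, x4^d, x1^(d-1) x2, x3^(d-1) x4),
   with variables x1..x4 indexed 0..3. *)
Definition gensI (F : fieldType) (d : nat) : seq {mpoly F[4]} :=
  [:: 'X_0 ^+ d; 'X_1 ^+ d; 'X_2 ^+ d; 'X_3 ^+ d;
      'X_0 ^+ d.-1 * 'X_1; 'X_2 ^+ d.-1 * 'X_3].

From HB Require Import structures.
From mathcomp Require Import all_boot all_order all_algebra.
From mathcomp.multinomials Require Import mpoly.
From mathcomp Require Import zify.
Set Implicit Arguments. Unset Strict Implicit. Unset Printing Implicit Defensive.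
Import GRing.Theory.
Local Open Scope ring_scope.

(* Write l = l12 + l34 with l12 = x1 + x2 and l34 = x3 + x4.  The form
   f = (l12^(2d-2) - (-l34)^(2d-2)) / l of degree 2d-3 satisfies l f \in I,
   because every monomial of degree 2d-2 in x1, x2 (or in x3, x4) lies in I.
   Yet f \notin I: the substitution x1, x2, x3, x4 |-> y, x, 0, 0 sends f to
   (x + y)^(2d-3), whose coefficient C(2d-3, d-1) at x^(d-1) y^(d-2) is nonzero
   in characteristic 0, while that coefficient vanishes on the image of I.
   Dually, x1^(d-1) x3^(d-1) \notin l S_(2d-3) + I: the substitution
   x1, x2, x3, x4 |-> x, -x, y, -y kills l, maps I to polynomials without the
   monomial x^(d-1) y^(d-1), and maps x1^(d-1) x3^(d-1) to that monomial. *)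

Section IdealMembership.
Variables (F : fieldType) (n : nat) (gs : seq {mpoly F[n]}).
Implicit Types (f g : {mpoly F[n]}).

Lemma in_ideal0 : in_ideal gs 0.
Proof. by exists (fun=> 0); rewrite big1 // => j _; rewrite mul0r. Qed.

Lemma in_idealD f g : in_ideal gs f -> in_ideal gs g -> in_ideal gs (f + g).
Proof.
case=> [h ->] [k ->]; exists (fun j => h j + k j).
by rewrite -big_split; apply: eq_bigr => j _; rewrite mulrDl.
Qed.

Lemma in_idealMl c f : in_ideal gs f -> in_ideal gs (c * f).
Proof.
case=> [h ->]; exists (fun j => c * h j).
by rewrite mulr_sumr; apply: eq_bigr => j _; rewrite mulrA.
Qed.

Lemma in_idealMr c f : in_ideal gs f -> in_ideal gs (f * c).
Proof. by rewrite mulrC; apply: in_idealMl. Qed.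

Lemma in_idealN f : in_ideal gs f -> in_ideal gs (- f).
Proof. by rewrite -mulN1r; apply: in_idealMl. Qed.

Lemma in_ideal_sum (I : finType) (h : I -> {mpoly F[n]}) :
  (forall i, in_ideal gs (h i)) -> in_ideal gs (\sum_i h i).
Proof.
by move=> hI; apply: big_ind => //; [exact: in_ideal0 | exact: in_idealD].
Qed.

Lemma in_ideal_nth j : (j < size gs)%N -> in_ideal gs gs`_j.
Proof.
move=> lt_j; exists (fun k => (val k == j)%:R).
rewrite (bigD1 (Ordinal lt_j)) //= eqxx mul1r big1 ?addr0 // => k.
by rewrite -val_eqE => /negbTE ->; rewrite mul0r.
Qed.

(* Each a^(2d-2-i) b^i is a multiple of a^d, of b^d, or (i = d-1) of a^(d-1) b. *)
Lemma in_ideal_exprD a b d : (1 < d)%N ->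
  in_ideal gs (a ^+ d) -> in_ideal gs (b ^+ d) -> in_ideal gs (a ^+ d.-1 * b) ->
  in_ideal gs ((a + b) ^+ (2 * d - 2)).
Proof.
move=> gt1d ad bd abd; rewrite exprDn; apply: in_ideal_sum => i.
rewrite -mulr_natl; apply: in_idealMl; have lt_i := ltn_ord i.
have splitX (x : {mpoly F[n]}) m k : (k <= m)%N -> x ^+ m = x ^+ (m - k) * x ^+ k.
  by move=> le_km; rewrite -exprD subnK.
case: (ltngtP i d.-1) => [lt_id | lt_di | ->].
- rewrite (splitX a _ d); last by lia.
  by rewrite -mulrA; apply: in_idealMl; apply: in_idealMr.
- by rewrite (splitX b i d) ?mulrA; [apply: in_idealMl | lia].
- rewrite (_ : (2 * d - 2 - d.-1 = d.-1)%N); last by lia.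
  rewrite (splitX b _ 1) ?expr1; last by lia.
  by rewrite mulrA mulrAC; apply: in_idealMr.
Qed.

Lemma in_ideal_raddf_eq0 (V : zmodType) (mu : {additive {mpoly F[n]} -> V}) :
  (forall h (j : 'I_(size gs)), mu (h * gs`_j) = 0) ->
  forall f, in_ideal gs f -> mu f = 0.
Proof. by move=> mu0 f [h ->]; rewrite raddf_sum big1 // => j _; apply: mu0. Qed.

End IdealMembership.

Lemma coef_CaddX_exp (R : comNzRingType) (c : R) m k :
  ((c%:P + 'X) ^+ m)`_k = c ^+ (m - k) *+ 'C(m, k).
Proof.
rewrite exprDn coef_sum.
pose t i := c ^+ (m - i) *+ 'C(m, i).
rewrite (eq_bigr (fun i : 'I_m.+1 => if val i == k then t i else 0)); last first.
  move=> i _; rewrite coefMn -rmorphXn coefCM coefXn eq_sym.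
  by case: eqP; rewrite ?mulr1 ?mulr0 ?mul0rn.
rewrite -big_mkcond (big_ord1_eq _ t) ltnS /t.
by case: leqP => // lt_mk; rewrite bin_small ?mulr0n.
Qed.

Section BivariateCoefficients.
Variable R : comNzRingType.
Implicit Types u : {poly {poly R}}.

Lemma coef2_mulXn u m k j : (k < m)%N -> (u * 'X^m)`_k`_j = 0.
Proof. by move=> lt_km; rewrite coefMXn lt_km coef0. Qed.

Lemma coef2_mulYn u m k j : (j < m)%N -> (u * 'Y ^+ m)`_k`_j = 0.
Proof. by move=> lt_jm; rewrite -rmorphXn coefMC coefMXn lt_jm. Qed.

Lemma coef2_XaddY_exp k j :
  (('X + 'Y : {poly {poly R}}) ^+ (k + j))`_k`_j = 'C(k + j, k)%:R.
Proof. by rewrite addrC coef_CaddX_exp addKn coefMn coefXn eqxx. Qed.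

End BivariateCoefficients.

Lemma mmapXU (n : nat) (R : nzRingType) (S : comNzRingType)
    (f : {rmorphism R -> S}) (h : 'I_n -> S) (i : 'I_n) :
  mmap f h 'X_i = h i.
Proof. by rewrite mmapX mmap1U. Qed.

Lemma dhomogXU (n : nat) (R : nzRingType) (i : 'I_n) :
  ('X_i : {mpoly R[n]}) \is 1.-homog.
Proof. by rewrite dhomogX; apply/eqP; apply: mdeg1. Qed.

Section WLPFailure.
Variables (F : fieldType) (d : nat).
Hypothesis gt1d : (1 < d)%N.
Local Notation I := (gensI F d).
Local Notation ev v := (mmap (polyC \o polyC) v).

Definition l12 : {mpoly F[4]} := 'X_0 + 'X_1.
Definition l34 : {mpoly F[4]} := 'X_2 + 'X_3.

Lemma lin_form4E : lin_form F 4 = l12 + l34.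
Proof. by rewrite /lin_form !big_ord_recr big_ord0 /= add0r !addrA. Qed.

Definition ker_witness : {mpoly F[4]} :=
  \sum_(i < 2 * d - 2) l12 ^+ ((2 * d - 2).-1 - i) * (- l34) ^+ i.

Lemma ker_witness_homog : ker_witness \is (2 * d - 3).-homog.
Proof.
apply: rpred_sum => i _.
rewrite (_ : (2 * d - 3 = 1 * ((2 * d - 2).-1 - i) + 1 * i)%N); last first.
  by have := ltn_ord i; lia.
by apply: dhomogM; apply: dhomogMn; rewrite ?dhomogN; apply: dhomogD; apply: dhomogXU.
Qed.

Lemma lin_form_mul_ker_witness_in_ideal : in_ideal I (lin_form F 4 * ker_witness).
Proof.
have gen j : (j < size I)%N -> in_ideal I I`_j := @in_ideal_nth _ _ I j.
rewrite lin_form4E -[l34]opprK -subrXX; apply: in_idealD.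
  by apply: in_ideal_exprD => //; [exact: (gen 0) | exact: (gen 1) | exact: (gen 4)].
apply/in_idealN; rewrite exprNn; apply/in_idealMl.
by apply: in_ideal_exprD => //; [exact: (gen 2) | exact: (gen 3) | exact: (gen 5)].
Qed.

Definition ker_eval (i : 'I_4) : {poly {poly F}} := [:: 'Y; 'X; 0; 0]`_i.

Lemma ker_eval_in_ideal f : in_ideal I f -> (ev ker_eval f)`_d.-1`_d.-2 = 0.
Proof.
apply: (in_ideal_raddf_eq0 (mu := coefp d.-2 \o coefp d.-1 \o ev ker_eval)) => h.
have d_eq : d = d.-2.+2 by lia.
case=> [[|[|[|[|[|[|j]]]]]] _] //=; rewrite !rmorphM ?rmorphXn /= !mmapXU /=.
- by rewrite coef2_mulYn //; lia.
- by rewrite coef2_mulXn //; lia.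
- by rewrite d_eq expr0n /= mulr0 !coef0.
- by rewrite d_eq expr0n /= mulr0 !coef0.
- by rewrite mulrA mulrAC coef2_mulYn //; lia.
- by rewrite !mulr0 !coef0.
Qed.

Lemma ev_ker_witness : ev ker_eval ker_witness = ('X + 'Y) ^+ (d.-1 + d.-2).
Proof.
rewrite rmorph_sum (_ : (2 * d - 2 = (d.-1 + d.-2).+1)%N); last by lia.
rewrite big_ord_recl big1 ?addr0 => [|i _].
  by rewrite rmorphM !rmorphXn /= expr0 mulr1 subn0 /l12 rmorphD /= !mmapXU /= addrC.
by rewrite rmorphM !rmorphXn rmorphN !rmorphD /= !mmapXU /= addr0 oppr0 expr0n mulr0.
Qed.

Lemma ker_witness_notin_ideal : [pchar F] =i pred0 -> ~ in_ideal I ker_witness.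
Proof.
move=> /pcharf0P charF0 /ker_eval_in_ideal /eqP.
by rewrite ev_ker_witness coef2_XaddY_exp charF0 eqn0Ngt bin_gt0 leq_addr.
Qed.

Definition coker_witness : {mpoly F[4]} := 'X_0 ^+ d.-1 * 'X_2 ^+ d.-1.

Lemma coker_witness_homog : coker_witness \is (2 * d - 3).+1.-homog.
Proof.
rewrite (_ : ((2 * d - 3).+1 = 1 * d.-1 + 1 * d.-1)%N); last by lia.
by apply: dhomogM; apply: dhomogMn; apply: dhomogXU.
Qed.

Definition coker_eval (i : 'I_4) : {poly {poly F}} := [:: 'X; - 'X; 'Y; - 'Y]`_i.

Lemma coker_eval_in_ideal f : in_ideal I f -> (ev coker_eval f)`_d.-1`_d.-1 = 0.
Proof.
apply: (in_ideal_raddf_eq0 (mu := coefp d.-1 \o coefp d.-1 \o ev coker_eval)) => h.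
case=> [[|[|[|[|[|[|j]]]]]] _] //=;
  rewrite !rmorphM ?rmorphXn /= !mmapXU /coker_eval /=.
- by rewrite coef2_mulXn //; lia.
- by rewrite exprNn mulrA coef2_mulXn //; lia.
- by rewrite coef2_mulYn //; lia.
- by rewrite exprNn mulrA coef2_mulYn //; lia.
- by rewrite mulrN -exprSr mulrN !coefN coef2_mulXn ?oppr0.
- by rewrite mulrN -exprSr mulrN !coefN coef2_mulYn ?oppr0.
Qed.

Lemma coker_witness_notin_image f :
  ~ in_ideal I (coker_witness - lin_form F 4 * f).
Proof.
move=> /coker_eval_in_ideal; rewrite rmorphB !rmorphM lin_form4E !rmorphD /=.
rewrite !rmorphXn /= !mmapXU /coker_eval /= !subrr addr0 mul0r subr0.
rewrite mulrC -rmorphXn coefCM !coefXn !eqxx mulr1 coefXn eqxx.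
by move/eqP; rewrite oner_eq0.
Qed.

End WLPFailure.

Local Close Scope ring_scope.

Theorem lemma4p6 (F : fieldType) (charF0 : [pchar F]%R =i pred0)
  (d : nat) (hd : 2 <= d) :
  fails_WLP_in (gensI F d) (2 * d - 3).
Proof.
split.
- move=> inj; apply: (ker_witness_notin_ideal hd charF0); apply: inj.
    exact: ker_witness_homog.
  exact: lin_form_mul_ker_witness_in_ideal.
- move=> surj; have [f _] := surj _ (coker_witness_homog F hd).
  exact: coker_witness_notin_image.
Qed.
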